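(* Let $G$ be a finite, simple, connected graph with $res_{wt}(G)=k$. Then every two vertices of $G$ have at most $k-2$ common neighbors.
   Context: $d(x,y)$ is the shortest-path distance. A set $W\subseteq V(G)$ is a resolving set if for every two distinct vertices $y,z$ there is $x\in W$ with $d(y,x)\ne d(z,x)$. A set $W$ is a weak total resolving set (WTR-set) if $W$ is resolving and, for every $w\in W$ and every $x\in V(G)\setminus W$, there is $w'\in W\setminus\{w\}$ with $d(x,w')\ne d(w,w')$. The weak total resolving number $res_{wt}(G)$ is the minimum positive integer $r$ such that every set of $r$ vertices of $G$ is a WTR-set for $G$. *)

From mathcomp Require Import all_boot.
Set Implicit Arguments. Unset Strict Implicit. Unset Printing Implicit Defensive.

Section Graph.
Variables (T : finType) (e : rel T).

Definition simple_graph : Prop := symmetric e /\ irreflexive e.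
Definition connected_graph : Prop := forall x y : T, connect e x y.

Fixpoint ball (x : T) (n : nat) : {set T} :=
  match n with
  | 0 => [set x]
  | n'.+1 => ball x n' :|: [set z | [exists w in ball x n', e w z]]
  end.

(* shortest-path distance: least n with y in ball x n
   (correct for connected graphs, where d(x,y) < #|T|) *)
Definition dist (x y : T) : nat := find (fun n => y \in ball x n) (iota 0 #|T|).

Definition resolving (W : {set T}) : Prop :=
  forall y z : T, y != z -> exists2 x, x \in W & dist y x != dist z x.

Definition WTR (W : {set T}) : Prop :=
  resolving W /\
  forall w x, w \in W -> x \notin W ->
    exists2 w', w' \in W :\ w & dist x w' != dist w w'.

Definition all_WTR (r : nat) : Prop := forall W : {set T}, #|W| = r -> WTR W.

Definition res_wt_eq (k : nat) : Prop :=
  0 < k /\ all_WTR k /\ (forall r, 0 < r < k -> ~ all_WTR r).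

Definition common_nbrs (x y : T) : {set T} := [set z | e x z && e y z].
End Graph.

From mathcomp Require Import all_boot zify.

Set Implicit Arguments.
Unset Strict Implicit.
Unset Printing Implicit Defensive.

(* Let C be the set of common neighbours of x and y.  Every vertex of C is at
   distance 1 from both x and y.  If #|C| >= k - 1, adjoin x to k - 1 vertices
   of C: the resulting k-set W is not weak total resolving, because no
   w' in W other than x distinguishes the outside vertex y from x. *)

Lemma card_subset_exists (T : finType) (A : {set T}) (n : nat) :
  n <= #|A| -> exists2 B : {set T}, B \subset A & #|B| = n.
Proof.
move=> le_n_A; exists [set a in take n (enum A)].
  by apply/subsetP => a; rewrite inE => /mem_take; rewrite mem_enum.
rewrite cardsE (card_uniqP (take_uniq _ (enum_uniq _))) size_takel //.
by rewrite -cardE.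
Qed.

Section Distance.
Variables (T : finType) (e : rel T).

Lemma dist_edge (a b : T) : e a b -> a != b -> dist e a b = 1.
Proof.
move=> eab neq_ab.
have : 1 < #|T| by have := max_card (mem [set a; b]); rewrite cards2 neq_ab.
rewrite /dist; case: #|T| => [|[|n]] // _ /=.
rewrite in_set1 eq_sym (negbTE neq_ab) in_setU1 eq_sym (negbTE neq_ab) inE.
by have -> : [exists w in [set a], e w b] by apply/exists_inP; exists a; rewrite ?in_set1.
Qed.

Lemma common_nbrs_equidistant (x y c : T) : simple_graph e ->
  c \in common_nbrs e x y -> dist e x c = dist e y c.
Proof.
move=> [_ e_irr]; rewrite inE => /andP[exc eyc].
have neq_xc : x != c by apply: contraTneq exc => ->; rewrite e_irr.
have neq_yc : y != c by apply: contraTneq eyc => ->; rewrite e_irr.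
by rewrite !dist_edge.
Qed.

Lemma equidistant_setU1_not_WTR (x y : T) (W : {set T}) :
  x != y -> y \notin W -> {in W, forall w, dist e x w = dist e y w} ->
  ~ WTR e (x |: W).
Proof.
move=> neq_xy yW eqd [_ wtr].
have yxW : y \notin x |: W by rewrite in_setU1 negb_or eq_sym neq_xy.
have [w'] := wtr x y (setU11 x W) yxW.
rewrite in_setD1 in_setU1 => /andP[neq_w'x /orP[/eqP w'x | w'W]].
  by rewrite w'x eqxx in neq_w'x.
by rewrite eqd // eqxx.
Qed.

End Distance.

Theorem lemma2 (T : finType) (e : rel T) (k : nat) :
  simple_graph e -> connected_graph e -> res_wt_eq e k ->
  forall x y : T, x != y -> #|common_nbrs e x y| <= k - 2.
Proof.
move=> simple_e _ [k_gt0 [all_k _]] x y neq_xy.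
rewrite leqNgt; apply/negP => big_C.
have [W sub_WC card_W] : exists2 W : {set T},
    W \subset common_nbrs e x y & #|W| = k.-1.
  by apply: card_subset_exists; lia.
have xW : x \notin W.
  by apply: contra (subsetP sub_WC x) _; rewrite inE (simple_e.2 x).
have yW : y \notin W.
  by apply: contra (subsetP sub_WC y) _; rewrite inE (simple_e.2 y) andbF.
have card_xW : #|x |: W| = k by rewrite cardsU1 xW card_W; lia.
apply: (equidistant_setU1_not_WTR neq_xy yW _ (all_k _ card_xW)).
by move=> w /(subsetP sub_WC); apply: common_nbrs_equidistant.
Qed.
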